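(* Let $(J,S)$ be a homogeneous $d$-dimensional multi-time Markov renewal chain with semi-Markov kernel $q$, and let $1\le u<v\le d$. Define $Y_0=0$, $Y_{n+1}=X^{[u]}_{n+1}\cdot X^{[v]}_{n+1}$ and $S^{[y]}_n=\sum_{k=0}^nY_k$. Then $(J,S^{[y]})$ is a Markov renewal chain with interjump times $(Y_n)_{n\ge1}$ and semi-Markov kernel $$q^{[y]}_{ij}(k)=\sum_{k_{1:d}\in\mathbb{N}^d:\ k_u\cdot k_v=k}q_{ij}(k_{1:d}),\qquad i,j\in E,\ k\in\mathbb{N}.$$
   Context: $E=\{1,\dots,s\}$. $\mathbb{N}^d$ carries the partial order $k\le l$ iff $k_u\le l_u$ for all $u$, and $k<l$ iff $k\le l$, $k\ne l$. A homogeneous $d$-dimensional multi-time Markov renewal chain is a process $(J_n,S_n)_{n\in\mathbb{N}}$, $J_n\in E$, $S_n\in\mathbb{N}^d$, $S_0=0_d$, $S_n<S_{n+1}$, such that a.s. $\mathbb{P}(J_{n+1}=j,S_{n+1}-S_n=k\mid J_{0:n},S_{0:n})=q_{J_nj}(k)$ with $q_{ij}(k)=\mathbb{P}(J_{n+1}=j,S_{n+1}-S_n=k\mid J_n=i)$ independent of $n$. Sojourn times $X_0=0_d$, $X_n=S_n-S_{n-1}$, with $u$-th coordinate $X^{[u]}_n$. ''Markov renewal chain with kernel $q^{[y]}$'' means $\mathbb{P}(J_{n+1}=j,S^{[y]}_{n+1}-S^{[y]}_n=k\mid J_{0:n},S^{[y]}_{0:n})=q^{[y]}_{J_nj}(k)$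 a.s. *)

From HB Require Import structures.
From mathcomp Require Import all_boot all_order all_algebra.
From mathcomp Require Import all_classical all_reals all_analysis.
Set Implicit Arguments. Unset Strict Implicit. Unset Printing Implicit Defensive.
Import Order.TTheory GRing.Theory Num.Theory.
Local Open Scope classical_set_scope.
Local Open Scope ring_scope.

Definition vecN (d : nat) := {ffun 'I_d -> nat}.

Definition vadd (d : nat) (x y : vecN d) : vecN d := [ffun u => (x u + y u)%N].
Definition vsub (d : nat) (x y : vecN d) : vecN d := [ffun u => (x u - y u)%N].
Definition vzero (d : nat) : vecN d := [ffun _ => 0%N].
Definition vlt (d : nat) (x y : vecN d) : Prop :=
  (forall u, (x u <= y u)%N) /\ x <> y.

Section MRC.
Context {dm : measure_display} {T : measurableType dm} {R : realType}.
Variable (P : probability T R).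

Definition discrete_rv (V : Type) (Z : T -> V) : Prop :=
  forall v : V, measurable [set w | Z w = v].

Definition hist_event (E V : Type) (J : nat -> T -> E) (S : nat -> T -> V)
  (n : nat) (jh : nat -> E) (sh : nat -> V) : set T :=
  [set w | forall m, (m <= n)%N -> J m w = jh m /\ S m w = sh m].

(* Markov renewal property (discrete version of the a.s. conditional
   identity): P(J_{0:n}, S_{0:n}, J_{n+1}=j, S_{n+1}-S_n=k)
               = q_{J_n j}(k) P(J_{0:n}, S_{0:n}). *)
Definition MR_property (E V : Type) (plus : V -> V -> V)
  (J : nat -> T -> E) (S : nat -> T -> V) (q : E -> E -> V -> \bar R) : Prop :=
  forall (n : nat) (jh : nat -> E) (sh : nat -> V) (j : E) (k : V),
    P (hist_event J S n jh sh `&`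
       [set w | J n.+1 w = j /\ S n.+1 w = plus (S n w) k])
    = (q (jh n) j k * P (hist_event J S n jh sh))%E.

Definition MMRC (s d : nat) (J : nat -> T -> 'I_s) (S : nat -> T -> vecN d)
  (q : 'I_s -> 'I_s -> vecN d -> R) : Prop :=
  [/\ (forall n, discrete_rv (J n)),
      (forall n, discrete_rv (S n)),
      (forall w, S 0%N w = vzero d),
      (forall n w, vlt (S n w) (S n.+1 w)) &
      (forall i j k, 0 <= q i j k) /\
      MR_property (@vadd d) J S (fun i j k => (q i j k)%:E)].

Definition MRC (s : nat) (J : nat -> T -> 'I_s) (S : nat -> T -> nat)
  (q : 'I_s -> 'I_s -> nat -> \bar R) : Prop :=
  MR_property addn J S q.

End MRC.

Definition sojourn {T : Type} (d : nat) (S : nat -> T -> vecN d) (n : nat) (w : T)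
  : vecN d :=
  if n is n'.+1 then vsub (S n'.+1 w) (S n' w) else vzero d.

Definition Yprod {T : Type} (d : nat) (S : nat -> T -> vecN d) (u v : 'I_d)
  (n : nat) (w : T) : nat :=
  if n is n'.+1 then (sojourn S n'.+1 w u * sojourn S n'.+1 w v)%N else 0%N.

Definition Sy {T : Type} (d : nat) (S : nat -> T -> vecN d) (u v : 'I_d)
  (n : nat) (w : T) : nat :=
  (\sum_(0 <= m < n.+1) Yprod S u v m w)%N.

Definition qy {R : realType} (s d : nat) (q : 'I_s -> 'I_s -> vecN d -> R)
  (u v : 'I_d) (i j : 'I_s) (k : nat) : \bar R :=
  \esum_(x in [set x : vecN d | (x u * x v)%N = k]) (q i j x)%:E.

(** For f : N^d -> N put S^f_n = f(X_1) + ... + f(X_n). The history of (J, S^f)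
    up to time n is a function of the countably-valued history
    h = (J_m, S_m)_(m <= n) of (J, S), and S^f_(n+1) - S^f_n = f x for the next
    sojourn time x = X_(n+1). Splitting the event
    {J_(0:n), S^f_(0:n), J_(n+1) = j, S^f_(n+1) - S^f_n = k} along the values of h
    and of x with f x = k, the Markov renewal property of (J, S) gives each piece
    the probability q_(J_n j)(x) P(history = h), and countable additivity sums
    these to q^f_(J_n j)(k) P(J_(0:n), S^f_(0:n)). The corollary is the case
    f x = x_u x_v, for which S^f = S^[y]. *)

From HB Require Import structures.
From mathcomp Require Import all_boot all_order all_algebra.
From mathcomp Require Import all_classical all_reals all_analysis.
Set Implicit Arguments. Unset Strict Implicit. Unset Printing Implicit Defensive.
Import Order.TTheory GRing.Theory Num.Theory.
Local Open Scope classical_set_scope.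
Local Open Scope ring_scope.
Local Open Scope ereal_scope.

Section countable_esum.
Context {R : realType} {I : countType}.
Implicit Types (D : set I) (a : I -> \bar R).

Lemma esum_pickle D a : (forall i, D i -> 0 <= a i) ->
  \esum_(i in D) a i = \sum_(n <oo | n \in pickle @` D) oapp a 0 (unpickle n).
Proof.
move=> a0; rewrite nneseries_esum; last first.
  by move=> n; rewrite inE => -[i Di <-]; rewrite pickleK; exact: a0.
rewrite set_mem_set esum_image; last first.
  by move=> x y _ _; exact: (pcan_inj (@pickleK I)).
by apply: eq_esum => i _; rewrite pickleK.
Qed.

Lemma ge0_esumZl D a (c : R) : (0 <= c)%R -> (forall i, D i -> 0 <= a i) ->
  \esum_(i in D) (c%:E * a i) = c%:E * \esum_(i in D) a i.
Proof.
move=> c0 a0; rewrite !esum_pickle//; last first.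
  by move=> i Di; rewrite mule_ge0// ?a0// lee_fin.
rewrite -nneseriesZl; last first.
  by move=> n; rewrite inE => -[i Di <-]; rewrite pickleK; exact: a0.
by apply: eq_eseriesr => n _; case: unpickle => //=; rewrite mule0.
Qed.

End countable_esum.

Section countable_additivity.
Context {d : measure_display} {T : measurableType d} {I : countType}.
Implicit Types (D : set I) (F : I -> set T).

Lemma countable_bigcup_measurable D F :
  (forall i, D i -> measurable (F i)) -> measurable (\bigcup_(i in D) F i).
Proof.
move=> mF; rewrite bigcup_mkcond; apply: countable_bigcupT_measurable.
  exact: countableP.
by move=> i; case: ifPn => [/[!inE]/mF|_] //.
Qed.

Lemma measure_countable_bigcup {R : realType} (mu : {measure set T -> \bar R})
    D F :
  (forall i, D i -> measurable (F i)) -> trivIset D F ->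
  mu (\bigcup_(i in D) F i) = \esum_(i in D) mu (F i).
Proof.
move=> mF tF; pose G n := oapp F set0 (unpickle n).
have -> : \bigcup_(i in D) F i = \bigcup_(n in pickle @` D) G n.
  apply/seteqP; split => [w [i Di Fiw]|w [_ [i Di <-]]].
  - by exists (pickle i); [exists i | rewrite /G pickleK].
  - by rewrite /G pickleK => Fiw; exists i.
rewrite measure_bigcup; first last.
- by move=> _ _ [i Di <-] [j Dj <-]; rewrite /G !pickleK => /(tF _ _ Di Dj) ->.
- by move=> _ [i Di <-]; rewrite /G pickleK; exact: mF.
rewrite esum_pickle; last by move=> *; exact: measure_ge0.
by apply: eq_eseriesr => n _; rewrite /G; case: unpickle => //=; rewrite measure0.
Qed.

End countable_additivity.

Lemma vaddK d (a x : vecN d) : vsub (vadd a x) a = x.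
Proof. by apply/ffunP => i; rewrite !ffunE addKn. Qed.

Lemma vsubKC d (a b : vecN d) : (forall i, (a i <= b i)%N) -> vadd a (vsub b a) = b.
Proof. by move=> ab; apply/ffunP => i; rewrite !ffunE subnKC. Qed.

Definition sojourn_sum {T : Type} (d : nat) (f : vecN d -> nat)
  (S : nat -> T -> vecN d) (n : nat) (w : T) : nat :=
  (\sum_(1 <= m < n.+1) f (sojourn S m w))%N.

Definition image_kernel {R : realType} (s d : nat) (q : 'I_s -> 'I_s -> vecN d -> R)
  (f : vecN d -> nat) (i j : 'I_s) (k : nat) : \bar R :=
  \esum_(x in [set x | f x = k]) (q i j x)%:E.

Section sojourn_sum.
Context {T : Type} (d : nat) (f : vecN d -> nat) (S : nat -> T -> vecN d).

Lemma sojourn_sumS n w :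
  sojourn_sum f S n.+1 w = (sojourn_sum f S n w + f (sojourn S n.+1 w))%N.
Proof. by rewrite /sojourn_sum big_nat_recr. Qed.

Lemma eq_sojourn_sum n w w' : (forall m, (m <= n)%N -> S m w = S m w') ->
  sojourn_sum f S n w = sojourn_sum f S n w'.
Proof.
move=> eqS; apply: eq_big_nat => -[//|m] /andP[_ mn].
by rewrite /sojourn !eqS //; exact: ltnW.
Qed.

Lemma Sy_sojourn_sum (u v : 'I_d) : Sy S u v = sojourn_sum (fun x => x u * x v)%N S.
Proof.
apply/funext => n; apply/funext => w; rewrite /Sy big_ltn // add0n.
by apply: eq_big_nat => -[].
Qed.

End sojourn_sum.

Definition history {T : Type} (s d : nat) (J : nat -> T -> 'I_s)
  (S : nat -> T -> vecN d) (n : nat) (w : T) : {ffun 'I_n.+1 -> 'I_s * vecN d} :=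
  [ffun m : 'I_n.+1 => (J m w, S m w)].

Lemma history_eqP {T : Type} s d (J : nat -> T -> 'I_s) (S : nat -> T -> vecN d)
    n w w' :
  history J S n w = history J S n w' <->
  (forall m, (m <= n)%N -> J m w = J m w' /\ S m w = S m w').
Proof.
split => [/ffunP eqH m mn | eqH]; last first.
  by apply/ffunP => m; rewrite !ffunE; have [-> ->] := eqH m (ltn_ord m).
by have := eqH (inord m); rewrite !ffunE inordK // => -[-> ->].
Qed.

Section history_events.
Context {dm : measure_display} {T : measurableType dm}.

Lemma hist_event_measurable (E V : Type) (J : nat -> T -> E) (S : nat -> T -> V)
    n jh sh :
  (forall m, discrete_rv (J m)) -> (forall m, discrete_rv (S m)) ->
  measurable (hist_event J S n jh sh).
Proof.
move=> mJ mS; rewrite (_ : hist_event _ _ _ _ _ = \bigcap_(m in [set m | (m <= n)%N])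
   ([set w | J m w = jh m] `&` [set w | S m w = sh m])) //.
apply: bigcap_measurable; first by exists 0%N.
by move=> m _; apply: measurableI; [exact: mJ | exact: mS].
Qed.

Lemma MR_event_measurable (E V : Type) (plus : V -> V -> V)
    (J : nat -> T -> E) (S : nat -> T -> V) n jh sh j k :
  (forall m, discrete_rv (J m)) -> (forall m, discrete_rv (S m)) ->
  measurable (hist_event J S n jh sh `&`
              [set w | J n.+1 w = j /\ S n.+1 w = plus (S n w) k]).
Proof.
move=> mJ mS; rewrite (_ : _ `&` _ = hist_event J S n jh sh `&`
    ([set w | J n.+1 w = j] `&` [set w | S n.+1 w = plus (sh n) k])).
  apply: measurableI; first exact: hist_event_measurable.
  by apply: measurableI; [exact: mJ | exact: mS].
by apply/seteqP; split => w [hw [Jw Sw]]; rewrite /= -?Sw ?Sw (hw n (leqnn n)).2.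
Qed.

Lemma history_preimage s d (J : nat -> T -> 'I_s) (S : nat -> T -> vecN d) n w :
  [set w' | history J S n w' = history J S n w] = hist_event J S n (J^~ w) (S^~ w).
Proof. by apply/seteqP; split => w' /history_eqP. Qed.

End history_events.

Section sojourn_sum_chain.
Context {dm : measure_display} {T : measurableType dm} {R : realType}.
Variables (P : probability T R) (s d : nat).
Variables (J : nat -> T -> 'I_s) (S : nat -> T -> vecN d).
Variables (q : 'I_s -> 'I_s -> vecN d -> R) (f : vecN d -> nat).
Hypothesis mJ : forall n, discrete_rv (J n).
Hypothesis mS : forall n, discrete_rv (S n).
Hypothesis S_nondecr : forall n w i, (S n w i <= S n.+1 w i)%N.
Hypothesis q_ge0 : forall i j x, (0 <= q i j x)%R.
Hypothesis MR : MR_property P (@vadd d) J S (fun i j x => (q i j x)%:E).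

Variables (n : nat) (jh : nat -> 'I_s) (sh : nat -> nat) (j : 'I_s) (k : nat).

Let A := hist_event J (sojourn_sum f S) n jh sh.
Let D := history J S n @` A.
Let K := [set x : vecN d | f x = k].
Let piece (p : vecN d * {ffun 'I_n.+1 -> 'I_s * vecN d}) :=
  [set w | history J S n w = p.2] `&`
  [set w | J n.+1 w = j /\ S n.+1 w = vadd (S n w) p.1].

Lemma history_closed w w' : history J S n w = history J S n w' -> A w' -> A w.
Proof.
move=> /history_eqP eqH Aw' m mn; have [-> _] := eqH m mn.
split; first exact: (Aw' m mn).1.
rewrite (@eq_sojourn_sum _ _ _ _ _ w w'); first exact: (Aw' m mn).2.
by move=> i im; exact: (eqH i (leq_trans im mn)).2.
Qed.

Lemma hist_event_bigcup : A = \bigcup_(h in D) [set w | history J S n w = h].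
Proof.
apply/seteqP; split => [w Aw|w [_ [w' Aw' <-] /history_closed]]; last exact.
by exists (history J S n w) => //; exists w.
Qed.

Lemma MR_event_bigcup :
  A `&` [set w | J n.+1 w = j /\
                 sojourn_sum f S n.+1 w = (sojourn_sum f S n w + k)%N] =
  \bigcup_(p in K `*` D) piece p.
Proof.
apply/seteqP; split => w.
- move=> [Aw [Jw]]; rewrite sojourn_sumS => /addnI fX.
  exists (sojourn S n.+1 w, history J S n w); first by split => //; exists w.
  by split => //; split => //=; rewrite vsubKC.
- move=> [[x h] [/= fx [w' Aw' <-]] [/= hw [Jw Sw]]].
  split; first exact: history_closed hw Aw'.
  by split => //; rewrite sojourn_sumS /sojourn Sw vaddK fx.
Qed.

Lemma trivIset_piece : trivIset (K `*` D) piece.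
Proof.
move=> [x h] [x' h'] _ _ [w [[/= <- [_ Sw]] [/= <- [_ Sw']]]].
by rewrite -(vaddK (S n w) x) -Sw Sw' vaddK.
Qed.

Lemma measurable_piece x h : D h -> measurable (piece (x, h)).
Proof.
by move=> [w _ <-]; rewrite /piece history_preimage; exact: MR_event_measurable.
Qed.

Lemma measure_piece x h : D h ->
  P (piece (x, h)) = (q (jh n) j x)%:E * P [set w | history J S n w = h].
Proof.
move=> [w Aw <-]; rewrite /piece history_preimage MR.
by have [<- _] := Aw n (leqnn n).
Qed.

Lemma measure_MR_event :
  P (A `&` [set w | J n.+1 w = j /\
                    sojourn_sum f S n.+1 w = (sojourn_sum f S n w + k)%N]) =
  image_kernel q f (jh n) j k * P A.
Proof.
have mlevel h : D h -> measurable [set w | history J S n w = h].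
  by move=> [w _ <-]; rewrite history_preimage; exact: hist_event_measurable.
have PA : P A = \esum_(h in D) P [set w | history J S n w = h].
  rewrite [in LHS]hist_event_bigcup measure_countable_bigcup //.
  by move=> h h' _ _ [w [/= <- <-]].
have PA_fin : P A \is a fin_num.
  apply: fin_num_measure; rewrite hist_event_bigcup.
  exact: countable_bigcup_measurable.
rewrite MR_event_bigcup measure_countable_bigcup; last 2 first.
- by move=> [x h] [_ Dh]; exact: measurable_piece.
- exact: trivIset_piece.
rewrite (eq_esum (fun p (Dp : (K `*` D) p) => measure_piece p.1 Dp.2)) /=.
rewrite -(esum_esum (I := K) (J := fun=> D)
  (a := fun x h => (q (jh n) j x)%:E * P [set w | history J S n w = h])); last first.
  by move=> x h _ _; rewrite mule_ge0 // lee_fin.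
transitivity (\esum_(x in K) ((fine (P A))%:E * (q (jh n) j x)%:E)).
  apply: eq_esum => x _; rewrite ge0_esumZl //.
  by rewrite -PA fineK // muleC.
rewrite ge0_esumZl; last by move=> *; rewrite lee_fin.
  by rewrite fineK // muleC.
by rewrite fine_ge0 // measure_ge0.
Qed.

End sojourn_sum_chain.

Theorem MMRC_sojourn_sum (dm : measure_display) (T : measurableType dm)
    (R : realType) (P : probability T R) (s d : nat)
    (J : nat -> T -> 'I_s) (S : nat -> T -> vecN d)
    (q : 'I_s -> 'I_s -> vecN d -> R) (f : vecN d -> nat) :
  MMRC P J S q -> MRC P J (sojourn_sum f S) (image_kernel q f).
Proof.
move=> [mJ mS _ S_lt [q_ge0 MR]] n jh sh j k.
by apply: measure_MR_event => // m w i; have [] := S_lt m w.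
Qed.

Theorem corollary2 (dm : measure_display) (T : measurableType dm) (R : realType)
  (P : probability T R) (s d : nat)
  (J : nat -> T -> 'I_s) (S : nat -> T -> vecN d)
  (q : 'I_s -> 'I_s -> vecN d -> R) (u v : 'I_d) :
  MMRC P J S q -> (u < v)%N ->
  MRC P J (Sy S u v) (qy q u v).
Proof. by move=> chain _; rewrite Sy_sojourn_sum; exact: MMRC_sojourn_sum. Qed.
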